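(* Let $K$ be a field, $X$ a finite connected poset, and fix $u_0\in X$. Let $\varphi,\psi$ be elementary Lie automorphisms of $I(X,K)$ such that $\theta_\varphi=\theta_\psi$ and $\varphi(e_z)(u_0,u_0)=\psi(e_z)(u_0,u_0)$ for all $z\in X$. Then $\varphi(e_z)=\psi(e_z)$ for all $z\in X$.
   Context: $I(X,K)$ is the incidence algebra: functions $f:X\times X\to K$ with $f(x,y)=0$ unless $x\le y$, product $(fg)(x,y)=\sum_{x\le t\le y}f(x,t)g(t,y)$; $e_{xy}$ ($x\le y$) is the basis element equal to $1$ at $(x,y)$ and $0$ elsewhere, $e_z=e_{zz}$. $B=\{e_{xy}:x<y\}$. A Lie automorphism is a bijective linear map preserving $[f,g]=fg-gf$. With $l(\lfloor x,y\rfloor)$ the maximal length of a chain in $\{z:x\le z\le y\}$ and $L_i=\mathrm{span}_K\{e_{xy}:l(\lfloor x,y\rfloor)=i\}$, for a Lie automorphism $\chi$ let $\widetilde\chi$ send $e_{xy}\in L_i$ to the $L_i$-component of $\chi(e_{xy})$. A Lie automorphism $\varphi$ is elementary if $\varphi=\widetilde\chi$ for some Lie automorphism $\chi$ (equivalently $\varphi(L_i)\subseteq L_i$ for all $i$). For elementary $\varphi$, for each $x<y$ there are a unique $e_{uv}\in B$ and $k\in K^*$ with $\varphi(e_{xy})=k e_{uv}$; set $\theta_\varphi(e_{xy})=e_{uv}$. Connected means any two elements are joined by a sequence in which consecutive elements are in a covering relation. *)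

From HB Require Import structures.
From mathcomp Require Import all_boot all_order all_algebra.
Set Implicit Arguments. Unset Strict Implicit. Unset Printing Implicit Defensive.
Import Order.TTheory GRing.Theory.
Local Open Scope ring_scope.

(* Incidence algebra I(X,K) of a finite poset X over a field K, realised
   inside the space of all functions X*X -> K. *)
Section Incidence.
Variables (d : Order.disp_t) (X : finPOrderType d) (K : fieldType).

Definition fun2 := {ffun X * X -> K}.

Definition inI (f : fun2) : Prop :=
  forall x y : X, ~~ (x <= y)%O -> f (x, y) = 0.

Definition incmul (f g : fun2) : fun2 :=
  [ffun p : X * X => \sum_(t : X | (p.1 <= t)%O && (t <= p.2)%O) f (p.1, t) * g (t, p.2)].

Definition scal (k : K) (f : fun2) : fun2 := [ffun p => k * f p].

Definition lie (f g : fun2) : fun2 := incmul f g - incmul g f.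

Definition e (x y : X) : fun2 := [ffun p : X * X => if p == (x, y) then 1 else 0].
Definition ez (z : X) : fun2 := e z z.

Definition LieAut (phi : fun2 -> fun2) : Prop :=
  (forall f, inI f -> inI (phi f)) /\
  (forall f g, inI f -> inI g -> phi (f + g) = phi f + phi g) /\
  (forall k f, inI f -> phi (scal k f) = scal k (phi f)) /\
  (forall f g, inI f -> inI g -> phi f = phi g -> f = g) /\
  (forall g, inI g -> exists2 f, inI f & phi f = g) /\
  (forall f g, inI f -> inI g -> phi (lie f g) = lie (phi f) (phi g)).

Definition is_chain (S : {set X}) : bool :=
  [forall a in S, forall b in S, (a <= b)%O || (b <= a)%O].

Definition len (x y : X) : nat :=
  \max_(S : {set X} | (S \subset [set z | (x <= z)%O && (z <= y)%O]) && is_chain S)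
    (#|S|.-1)%N.

Definition proj (i : nat) (g : fun2) : fun2 :=
  [ffun p : X * X => if (p.1 <= p.2)%O && (len p.1 p.2 == i) then g p else 0].

Definition tilde (chi : fun2 -> fun2) (f : fun2) : fun2 :=
  \sum_(p : X * X | (p.1 <= p.2)%O) scal (f p) (proj (len p.1 p.2) (chi (e p.1 p.2))).

Definition elementary (phi : fun2 -> fun2) : Prop :=
  LieAut phi /\
  exists chi, LieAut chi /\ forall f, inI f -> phi f = tilde chi f.

(* theta_phi(e_xy) = e_uv  iff  phi(e_xy) = k e_uv for some k in K^* (x<y, u<v) *)
Definition theta_rel (phi : fun2 -> fun2) (x y u v : X) : Prop :=
  (u < v)%O /\ exists2 k : K, k != 0 & phi (e x y) = scal k (e u v).

Definition theta_eq (phi psi : fun2 -> fun2) : Prop :=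
  forall x y : X, (x < y)%O -> forall u v : X,
    theta_rel phi x y u v <-> theta_rel psi x y u v.

Definition covers (a b : X) : bool :=
  (a < b)%O && [forall c, ~~ ((a < c)%O && (c < b)%O)].

Definition connected_poset : Prop :=
  forall a b : X, exists s : seq X,
    path (fun p q => covers p q || covers q p) a s /\ last a s = b.

End Incidence.

From HB Require Import structures.
From mathcomp Require Import all_boot all_order all_algebra.
Set Implicit Arguments. Unset Strict Implicit. Unset Printing Implicit Defensive.
Import Order.TTheory GRing.Theory.
Local Open Scope ring_scope.

(* An elementary Lie automorphism phi maps each e_z to a diagonal element and
   each e_xy (x < y) into the span of the e_uv with u < v.  Applying phi to
   [e_z, e_xy] = ([z = x] - [z = y]) e_xy shows that
   phi(e_z)(u,u) - phi(e_z)(v,v) = [z = x] - [z = y] whenever phi(e_xy)(u,v) <> 0.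
   Since phi is onto, the diagonals of the phi(e_z) span all diagonal functions,
   so these gaps determine (u,v): phi(e_xy) is a multiple of a single e_uv, and
   every e_uv with u < v is reached.  When theta_phi = theta_psi the gaps of
   phi(e_z) and psi(e_z) thus agree across every u < v, so the diagonal of
   phi(e_z) - psi(e_z) is constant on the connected poset X and vanishes at u0. *)

Section IncidenceAlgebra.
Variables (d : Order.disp_t) (X : finPOrderType d) (K : fieldType).
Implicit Types (f g : fun2 X K) (x y z a b u v w : X).

Definition diagonal f : Prop := forall a b, a != b -> f (a, b) = 0.

Lemma inI_e x y : (x <= y)%O -> inI (e K x y).
Proof. by move=> xy a b; rewrite ffunE; case: eqP => // -[-> ->]; rewrite xy. Qed.

Lemma inI0 : inI (0 : fun2 X K).
Proof. by move=> a b _; rewrite ffunE. Qed.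

Lemma inID f g : inI f -> inI g -> inI (f + g).
Proof. by move=> If Ig a b ab; rewrite ffunE If // Ig // addr0. Qed.

Lemma inIZ k f : inI f -> inI (scal k f).
Proof. by move=> If a b ab; rewrite ffunE If // mulr0. Qed.

Lemma e_decomp f : inI f ->
  f = \sum_(p : X * X | (p.1 <= p.2)%O) scal (f p) (e K p.1 p.2).
Proof.
move=> If; apply/ffunP => q; rewrite sum_ffunE.
have scal_eE p : scal (f p) (e K p.1 p.2) q = if p == q then f p else 0.
  by rewrite !ffunE -surjective_pairing eq_sym; case: ifP; rewrite ?mulr1 ?mulr0.
case: (boolP (q.1 <= q.2)%O) => [le_q | gt_q].
  rewrite (big_only1 q le_q) => [|p /negPf pNq _]; by rewrite scal_eE ?eqxx ?pNq.
rewrite big1 => [|p le_p]; first by case: q {scal_eE} gt_q => a b /= /If.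
by rewrite scal_eE; case: eqP => // pq; rewrite -pq le_p in gt_q.
Qed.

Lemma sum_le_pairs (F : X * X -> K) : (forall p, (p.1 < p.2)%O -> F p = 0) ->
  \sum_(p : X * X | (p.1 <= p.2)%O) F p = \sum_z F (z, z).
Proof.
move=> F0; rewrite big_mkcond /=.
rewrite (eq_bigr (fun p => if (p.1 <= p.2)%O then F (p.1, p.2) else 0)) => [|[] //].
rewrite -(pair_bigA _ (fun a b => if (a <= b)%O then F (a, b) else 0)) /=.
apply: eq_bigr => a _; rewrite (big_only1 a) ?lexx // => b ba.
by case: ifP => // ab _; apply: F0; rewrite /= lt_def ba.
Qed.

Lemma lenxx z : len z z = 0%N.
Proof.
apply/eqP; rewrite -leqn0; apply/bigmax_leqP => S /andP [sub_zz _].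
have : S \subset [set z].
  apply: subset_trans sub_zz _; apply/subsetP => t; rewrite !inE => zt.
  by apply/eqP; apply: le_anti; rewrite andbC.
by move/subset_leq_card; rewrite cards1; case: #|S| => [|[]].
Qed.

Lemma len_gt0 x y : (x < y)%O -> (0 < len x y)%N.
Proof.
move=> xy.
apply: (leq_trans _ (@leq_bigmax_cond _ _ (fun S : {set X} => (#|S|.-1)%N) [set x; y] _)).
  by rewrite cards2 (lt_eqF xy).
apply/andP; split.
  by apply/subsetP => t; rewrite !inE => /orP [] /eqP ->; rewrite ?lexx ?(ltW xy).
apply/forallP => a; apply/implyP; rewrite !inE => xya.
apply/forallP => b; apply/implyP; rewrite !inE => xyb.
by case/orP: xya => /eqP ->; case/orP: xyb => /eqP ->; rewrite ?lexx ?(ltW xy) ?orbT.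
Qed.

Lemma proj_neq0 i g a b : proj i g (a, b) != 0 -> (a <= b)%O && (len a b == i).
Proof. by rewrite ffunE /=; case: ifP => // _; rewrite eqxx. Qed.

Lemma tilde_e chi x y : (x <= y)%O ->
  tilde chi (e K x y) = proj (len x y) (chi (e K x y)).
Proof.
move=> xy; rewrite /tilde (big_only1 (x, y)) //= => [|p /negPf pNxy _].
  by apply/ffunP => p; rewrite !ffunE eqxx mul1r.
by apply/ffunP => q; rewrite !ffunE pNxy mul0r.
Qed.

Lemma incmul_diagl D f a b : diagonal D ->
  incmul D f (a, b) = if (a <= b)%O then D (a, a) * f (a, b) else 0.
Proof.
move=> diagD; rewrite ffunE /=; case: ifP => [ab | abN].
  by rewrite (big_only1 a) ?lexx ?ab // => t ta _; rewrite diagD ?mul0r // eq_sym.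
by apply: big1 => t /andP [le_at le_tb]; rewrite (le_trans le_at le_tb) in abN.
Qed.

Lemma incmul_diagr D f a b : diagonal D ->
  incmul f D (a, b) = if (a <= b)%O then f (a, b) * D (b, b) else 0.
Proof.
move=> diagD; rewrite ffunE /=; case: ifP => [ab | abN].
  by rewrite (big_only1 b) ?lexx ?ab // => t tb _; rewrite diagD ?mulr0.
by apply: big1 => t /andP [le_at le_tb]; rewrite (le_trans le_at le_tb) in abN.
Qed.

Lemma lie_diagE D f a b : diagonal D ->
  lie D f (a, b) = if (a <= b)%O then (D (a, a) - D (b, b)) * f (a, b) else 0.
Proof.
move=> diagD; rewrite /lie ffunE incmul_diagl // ffunE incmul_diagr //.
by case: ifP; rewrite ?subrr // mulrBl [f _ * _]mulrC.
Qed.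

Lemma ez_diagonal z : diagonal (ez K z).
Proof. by move=> a b; rewrite ffunE; case: ((a, b) =P (z, z)) => // -[-> ->]; rewrite eqxx. Qed.

Lemma lie_ez_e z x y : (x <= y)%O ->
  lie (ez K z) (e K x y) = scal ((z == x)%:R - (z == y)%:R) (e K x y).
Proof.
move=> xy; apply/ffunP => -[a b]; rewrite lie_diagE; last exact: ez_diagonal.
rewrite !ffunE !xpair_eqE !andbb.
case: (eqVneq a x) => [->|]; case: (eqVneq b y) => [->|] //=; rewrite ?mulr0 ?if_same //.
by rewrite xy !mulr1 (eq_sym x) (eq_sym y); case: (z == x); case: (z == y).
Qed.

(* Without the order hypotheses (a, b) = (v, u) would also solve the equations
   in characteristic 2. *)
Lemma delta_diff_inj a b u v : (a < b)%O -> (u < v)%O ->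
  (forall w, (a == w)%:R - (b == w)%:R = (u == w)%:R - (v == w)%:R :> K) ->
  (a, b) = (u, v).
Proof.
move=> ab uv E.
case: (eqVneq a u) => [au | aNu].
  subst u; congr pair; move: (E b); rewrite eqxx (lt_eqF ab).
  by case: (eqVneq v b) => // _ /eqP; rewrite sub0r subr0 oppr_eq0 oner_eq0.
move: (E u) (E a).
rewrite !eqxx (negPf aNu) (eq_sym u a) (negPf aNu) (gt_eqF uv) (gt_eqF ab) ?mulr0n ?mulr1n.
case: (eqVneq b u) => [bu | _] /eqP; last by rewrite subrr eq_sym subr0 oner_eq0.
case: (eqVneq v a) => [va | _] _ /eqP; last by rewrite !subr0 oner_eq0.
by move: uv; rewrite -bu va (lt_gtF ab).
Qed.

Lemma connected_poset_const (T : Type) (F : X -> T) : connected_poset X ->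
  (forall u v, (u < v)%O -> F u = F v) -> forall a b, F a = F b.
Proof.
move=> conn F_lt a b; have [s [path_s <-]] := conn a b.
elim: s a path_s => //= c s IHs a /andP [ac path_s]; rewrite -IHs //.
by case/orP: ac => /andP [ac _]; [exact: F_lt | exact/esym/F_lt].
Qed.

Section LieAutomorphism.
Variable phi : fun2 X K -> fun2 X K.
Hypothesis phiL : LieAut phi.

Lemma lieautZ k f : inI f -> phi (scal k f) = scal k (phi f).
Proof. by case: phiL => _ [_ [phiZ _]]; apply: phiZ. Qed.

Lemma lieaut_lie f g : inI f -> inI g -> phi (lie f g) = lie (phi f) (phi g).
Proof. by case: phiL => _ [_ [_ [_ [_ phi_lie]]]]; apply: phi_lie. Qed.

Lemma lieaut_surj g : inI g -> exists2 f, inI f & phi f = g.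
Proof. by case: phiL => _ [_ [_ [_ [phi_surj _]]]]; apply: phi_surj. Qed.

Lemma lieaut0 : phi 0 = 0.
Proof.
case: phiL => _ [phiD _]; apply: (@addrI _ (phi 0)).
by rewrite -phiD ?addr0 //; exact: inI0.
Qed.

Lemma lieaut_sum (I : finType) (P : pred I) (F : I -> fun2 X K) :
  (forall i, P i -> inI (F i)) ->
  phi (\sum_(i | P i) F i) = \sum_(i | P i) phi (F i).
Proof.
case: phiL => _ [phiD _] IF.
suff [] : inI (\sum_(i | P i) F i) /\ phi (\sum_(i | P i) F i) = \sum_(i | P i) phi (F i) by [].
apply: (big_ind2 (fun f g => inI f /\ phi f = g)) => [|f1 g1 f2 g2 [If1 <-] [If2 <-]|i /IF //].
  by split; [exact: inI0 | exact: lieaut0].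
by split; [exact: inID | exact: phiD].
Qed.

Lemma lieaut_entry f a b : inI f ->
  phi f (a, b) = \sum_(p : X * X | (p.1 <= p.2)%O) f p * phi (e K p.1 p.2) (a, b).
Proof.
move=> If; rewrite {1}(e_decomp If) lieaut_sum => [|p le_p]; last exact/inIZ/inI_e.
by rewrite sum_ffunE; apply: eq_bigr => p le_p; rewrite lieautZ ?ffunE //; exact: inI_e.
Qed.

End LieAutomorphism.

Section ElementaryLieAutomorphism.
Variable phi : fun2 X K -> fun2 X K.
Hypothesis phiE : elementary phi.

Let phiL : LieAut phi. Proof. by case: phiE. Qed.

Lemma elementary_e_neq0 x y a b : (x <= y)%O ->
  phi (e K x y) (a, b) != 0 -> (a <= b)%O && (len a b == len x y).
Proof.
move=> xy; case: phiE => _ [chi [_ ->]]; last exact: inI_e.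
by rewrite tilde_e //; apply: proj_neq0.
Qed.

Lemma elementary_ez_diagonal z : diagonal (phi (ez K z)).
Proof.
move=> a b aNb; apply/eqP/negP => /negP /(elementary_e_neq0 (lexx z)).
rewrite lenxx => /andP [ab /eqP len0].
have lt_ab : (a < b)%O by rewrite lt_def eq_sym aNb ab.
by have := len_gt0 lt_ab; rewrite len0.
Qed.

Lemma elementary_e_lt x y a b : (x < y)%O -> phi (e K x y) (a, b) != 0 -> (a < b)%O.
Proof.
move=> xy /(elementary_e_neq0 (ltW xy)) /andP [ab /eqP len_ab].
rewrite lt_def ab andbT; apply: contraTneq (len_gt0 xy) => ba.
by rewrite -len_ab ba lenxx.
Qed.

Lemma elementary_diagE f b : inI f ->
  phi f (b, b) = \sum_z f (z, z) * phi (ez K z) (b, b).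
Proof.
move=> If; rewrite lieaut_entry // sum_le_pairs // => -[x y] /= xy.
apply/eqP; rewrite mulf_eq0; apply/orP; right; apply: contraT => nz.
by have := elementary_e_lt xy nz; rewrite ltxx.
Qed.

Lemma elementary_ez_gap z x y u v : (x < y)%O -> phi (e K x y) (u, v) != 0 ->
  phi (ez K z) (u, u) - phi (ez K z) (v, v) = (z == x)%:R - (z == y)%:R.
Proof.
move=> xy nz; have Ie := inI_e (ltW xy); have uv := ltW (elementary_e_lt xy nz).
have := congr1 (fun f => f (u, v)) (lieaut_lie phiL (inI_e (lexx z)) Ie).
rewrite lie_ez_e ?(ltW xy) // lieautZ // lie_diagE ?uv ?ffunE; last exact: elementary_ez_diagonal.
by move/esym/(mulIf nz).
Qed.

Lemma elementary_diag_span w : exists c : X -> K,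
  forall b, (b == w)%:R = \sum_z c z * phi (ez K z) (b, b).
Proof.
have [f If phi_f] := lieaut_surj phiL (inI_e (lexx w)).
exists (fun z => f (z, z)) => b; rewrite -elementary_diagE // phi_f ffunE xpair_eqE andbb.
by case: (b == w).
Qed.

Lemma elementary_e_support_uniq x y a b u v : (x < y)%O ->
  phi (e K x y) (a, b) != 0 -> phi (e K x y) (u, v) != 0 -> (a, b) = (u, v).
Proof.
move=> xy nz_ab nz_uv.
apply: delta_diff_inj (elementary_e_lt xy nz_ab) (elementary_e_lt xy nz_uv) _ => w.
have [c Ec] := elementary_diag_span w.
rewrite !Ec -!sumrB; apply: eq_bigr => z _.
by rewrite -!mulrBr (elementary_ez_gap z xy nz_ab) (elementary_ez_gap z xy nz_uv).
Qed.

Lemma elementary_e_monomial x y u v : (x < y)%O -> phi (e K x y) (u, v) != 0 ->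
  phi (e K x y) = scal (phi (e K x y) (u, v)) (e K u v).
Proof.
move=> xy nz_uv; apply/ffunP => -[a b]; rewrite !ffunE.
case: eqP => [[-> ->] | abNuv]; first by rewrite mulr1.
rewrite mulr0; apply/eqP; apply: contraT => nz_ab.
by case: abNuv; exact: elementary_e_support_uniq nz_ab nz_uv.
Qed.

Lemma elementary_theta_rel x y u v : (x < y)%O -> phi (e K x y) (u, v) != 0 ->
  theta_rel phi x y u v.
Proof.
move=> xy nz; split; first exact: elementary_e_lt nz.
by exists (phi (e K x y) (u, v)); last exact: elementary_e_monomial.
Qed.

Lemma elementary_e_support_exists u v : (u < v)%O ->
  exists x y, (x < y)%O /\ phi (e K x y) (u, v) != 0.
Proof.
move=> uv; have [f If phi_f] := lieaut_surj phiL (inI_e (ltW uv)).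
have [/existsP [[x y] /andP [xy nz]] | none] :=
  boolP [exists p : X * X, (p.1 < p.2)%O && (phi (e K p.1 p.2) (u, v) != 0)].
  by exists x, y.
have := congr1 (fun g => g (u, v)) phi_f; rewrite /= lieaut_entry // ffunE eqxx.
rewrite big1 => [/eqP | [a b] /= ab]; first by rewrite eq_sym oner_eq0.
case: (eqVneq a b) => [<- | aNb].
  by rewrite elementary_ez_diagonal ?mulr0 ?(lt_eqF uv).
move/existsPn: none => /(_ (a, b)); rewrite /= lt_def eq_sym aNb ab /= negbK.
by move/eqP ->; rewrite mulr0.
Qed.

End ElementaryLieAutomorphism.

Lemma theta_eq_ez_diag_shift phi psi z u v :
  elementary phi -> elementary psi -> theta_eq phi psi -> (u < v)%O ->
  phi (ez K z) (u, u) - psi (ez K z) (u, u) = phi (ez K z) (v, v) - psi (ez K z) (v, v).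
Proof.
move=> phiE psiE th uv.
have [x [y [xy nz]]] := elementary_e_support_exists phiE uv.
have [_ [k k_neq0 psi_e]] := (th x y xy u v).1 (elementary_theta_rel phiE xy nz).
have nz' : psi (e K x y) (u, v) != 0 by rewrite psi_e !ffunE eqxx mulr1.
rewrite -[phi _ (u, u)](subrK (phi (ez K z) (v, v))) (elementary_ez_gap phiE z xy nz).
rewrite -[psi _ (u, u)](subrK (psi (ez K z) (v, v))) (elementary_ez_gap psiE z xy nz').
by rewrite opprD addrACA subrr add0r.
Qed.

End IncidenceAlgebra.

Theorem lemma5p8 (d : Order.disp_t) (X : finPOrderType d) (K : fieldType)
  (u0 : X) (phi psi : fun2 X K -> fun2 X K) :
  connected_poset X ->
  elementary phi -> elementary psi ->
  theta_eq phi psi ->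
  (forall z : X, phi (ez K z) (u0, u0) = psi (ez K z) (u0, u0)) ->
  forall z : X, phi (ez K z) = psi (ez K z).
Proof.
move=> conn phiE psiE th E0 z.
pose shift a := phi (ez K z) (a, a) - psi (ez K z) (a, a).
have shift0 a : shift a = 0.
  rewrite (connected_poset_const conn (F := shift) _ a u0) /shift ?E0 ?subrr // => u v.
  exact: theta_eq_ez_diag_shift.
apply/ffunP => -[a b]; case: (eqVneq a b) => [<- | aNb].
  by apply/eqP; rewrite -subr_eq0; apply/eqP/shift0.
by rewrite !elementary_ez_diagonal.
Qed.
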